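(* Let $n=p_1^{\alpha_1}p_2^{\alpha_2}\cdots p_r^{\alpha_r}$ be a positive integer, where the $p_i$ are primes with $2<p_1<p_2<\cdots<p_r=p$ and $\alpha_i>0$ for each $1\le i\le r$. If $p\ge 37$, then $$\psi(C_n)\ \ge\ h'(12)\,\frac{n^2}{p+1},$$ where $h'(12)=37\cdot\prod_{i=2}^{11}\frac{q_i}{q_i+1}=37\cdot\frac{3}{4}\cdot\frac{5}{6}\cdot\frac{7}{8}\cdot\frac{11}{12}\cdot\frac{13}{14}\cdot\frac{17}{18}\cdot\frac{19}{20}\cdot\frac{23}{24}\cdot\frac{29}{30}\cdot\frac{31}{32}$.
   Context: For a finite group $G$, $\psi(G)=\sum_{g\in G} o(g)$, where $o(g)$ is the order of $g$; $C_n$ is the cyclic group of order $n$. Let $2=q_1<q_2<q_3<\cdots$ be the list of all primes in increasing order. Define $f'(1)=1$, $f'(r)=\prod_{i=2}^{r}\frac{q_i}{q_i+1}$ for $r\ge 2$, and $h'(2)=3$, $h'(s)=f'(s-1)\,q_s$ for $s\ge 2$; in particular $q_{12}=37$. *)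

From HB Require Import structures.
From mathcomp Require Import all_boot all_order all_algebra all_fingroup all_solvable.
Set Implicit Arguments. Unset Strict Implicit. Unset Printing Implicit Defensive.
Import Order.TTheory GRing.Theory Num.Theory.

Definition psi (gT : finGroupType) (G : {set gT}) : nat := \sum_(g in G) #[g]%g.

(* h'(12) = q_12 * f'(11) = 37 * prod_{i=2}^{11} q_i/(q_i+1), where
   q_2,...,q_11 are exactly the primes q with 3 <= q <= 31. *)
Definition h12 : rat :=
  (37%:R * \prod_(3 <= q < 32 | prime q) ((q%:R : rat) / (q.+1)%:R))%R.

From HB Require Import structures.
From mathcomp Require Import all_boot all_order all_algebra all_fingroup all_solvable.
From mathcomp Require Import zify.
Import Order.TTheory GRing.Theory Num.Theory.
Set Implicit Arguments. Unset Strict Implicit. Unset Printing Implicit Defensive.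

(* As [n %/ gcdn n k] is the order of [k] in Z/nZ, psi(C_n) is [psin n], a
   multiplicative function (Chinese remainder theorem) with
   (q + 1) psin(q^a) = q^(2a+1) + 1 on prime powers.  Hence
   psin n >= n^2 prod_(q | n) q/(q+1).  If n is odd with largest prime factor
   p, its primes are odd primes <= p, so the product is at least
   prod_(3 <= q <= p) q/(q+1) = H(p)/(p+1) with H(N) = N prod_(3 <= q < N) q/(q+1);
   and H is nondecreasing, with H(37) = h'(12). *)

Definition psin (n : nat) : nat := \sum_(0 <= k < n) n %/ gcdn n k.

Lemma psi_cyclic (gT : finGroupType) (G : {group gT}) :
  cyclic G -> psi G = psin #|G|.
Proof.
case/cyclicP=> x ->; rewrite /psi -orderE.
have -> : <[x]>%g = [set (x ^+ k)%g | k : 'I_#[x]%g].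
  apply/setP=> y; apply/idP/imsetP => [|[k _ ->]]; last exact: mem_cycle.
  by case/cyclePmin=> i lt_i_x ->; exists (Ordinal lt_i_x).
rewrite big_imset /=; first by rewrite /psin big_mkord; apply: eq_bigr => k _; rewrite orderXgcd.
move=> i j _ _ /eqP; rewrite eq_expg_mod_order !modn_small // => /eqP.
exact: val_inj.
Qed.

Lemma big_nat_blocks (R : Type) (idx : R) (op : Monoid.law idx) m n (F : nat -> R) :
  \big[op/idx]_(0 <= k < m * n) F k =
  \big[op/idx]_(0 <= j < m) \big[op/idx]_(0 <= r < n) F (j * n + r).
Proof.
elim: m => [|m IHm]; first by rewrite mul0n !big_geq.
rewrite big_nat_recr //= -IHm mulSn addnC (big_cat_nat _ (leq_addr n (m * n))) //=.
congr (op _ _); rewrite -{1}(add0n (m * n)) big_addn addKn.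
by apply: eq_bigr => r _; rewrite addnC.
Qed.

Lemma psin_pexpS q a : prime q ->
  psin (q ^ a.+1) = psin (q ^ a) + (q - 1) * q ^ a * q ^ a.+1.
Proof.
move=> q_pr; have q_gt0 := prime_gt0 q_pr.
rewrite {1}/psin expnSr big_nat_blocks.
rewrite (eq_bigr (fun j => q ^ a %/ gcdn (q ^ a) j + (q - 1) * q ^ a.+1)).
  by rewrite big_split /= sum_nat_const_nat subn0 -expnSr mulnCA mulnA.
move=> j _; rewrite big_ltn // addn0 -muln_gcdl divnMr //; congr (_ + _).
rewrite -expnSr (@eq_big_nat _ _ _ 1 q _ (fun _ => q ^ a.+1)).
  by rewrite sum_nat_const_nat mulnC.
move=> r /andP[r_gt0 lt_r_q].
have /eqP -> : coprime (q ^ a.+1) (j * q + r).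
  by rewrite coprime_pexpl // prime_coprime // dvdn_addr ?dvdn_mull // gtnNdvd.
by rewrite divn1.
Qed.

Lemma psin_pexp q a : prime q -> (q + 1) * psin (q ^ a) = q ^ a.*2.+1 + 1.
Proof.
move=> q_pr; elim: a => [|a IHa].
  by rewrite /psin expn0 big_nat1 gcdn0 divnn /= muln1 expn1.
rewrite psin_pexpS // mulnDr IHa doubleS !expnS; clear IHa.
have -> : q ^ a.*2 = q ^ a * q ^ a by rewrite -addnn expnD.
case: q q_pr => // q _; rewrite subn1 /=; nia.
Qed.

Lemma gcdnM_coprime m q k :
  coprime m q -> gcdn (m * q) k = gcdn m k * gcdn q k.
Proof.
move=> co_mq; apply/eqP; rewrite eqn_dvd; apply/andP; split.
  have g_k := dvdn_gcdr (m * q) k.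
  rewrite muln_gcdl dvdn_gcd (dvdn_mulr _ g_k) andbT muln_gcdr dvdn_gcd dvdn_gcdl.
  exact: dvdn_mull.
have co_gcd : coprime (gcdn m k) (gcdn q k).
  exact: coprime_dvdl (dvdn_gcdl m k) (coprime_dvdr (dvdn_gcdl q k) co_mq).
rewrite dvdn_gcd !Gauss_dvd // !dvdn_gcdr andbT.
by rewrite dvdn_mulr ?dvdn_mull ?dvdn_gcdl.
Qed.

Lemma psin_mul m q : 0 < m -> 0 < q -> coprime m q -> psin (m * q) = psin m * psin q.
Proof.
move=> m_gt0 q_gt0 co_mq; rewrite /psin !big_mkord.
have mq_gt0 : 0 < m * q by rewrite muln_gt0 m_gt0.
have gcdn_modM d k : d %| m * q -> gcdn d (k %% (m * q)) = gcdn d k.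
  by move=> d_mq; rewrite -gcdn_modr modn_dvdm // gcdn_modr.
pose crt (ij : 'I_m * 'I_q) : 'I_(m * q) :=
  Ordinal (ltn_pmod (chinese m q ij.1 ij.2) mq_gt0).
rewrite (reindex crt); last first.
  exists (fun k : 'I_(m * q) => (Ordinal (ltn_pmod k m_gt0), Ordinal (ltn_pmod k q_gt0))).
    move=> [i j] _; congr (_, _); apply: val_inj => /=.
      by rewrite modn_dvdm ?dvdn_mulr // chinese_modl // modn_small.
    by rewrite modn_dvdm ?dvdn_mull // chinese_modr // modn_small.
  by move=> k _; apply: val_inj; rewrite /= -(chinese_mod co_mq) modn_small.
rewrite big_distrlr pair_big /=; apply: eq_bigr => [[i j]] _ /=.
rewrite gcdnM_coprime // !gcdn_modM ?(dvdn_mulr q (dvdnn m)) ?(dvdn_mull m (dvdnn q)) //.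
rewrite -(gcdn_modr m) -(gcdn_modr q) chinese_modl // chinese_modr // !gcdn_modr.
rewrite -{1}(divnK (dvdn_gcdl m i)) -{1}(divnK (dvdn_gcdl q j)) mulnACA.
by rewrite mulnK // muln_gt0 !gcdn_gt0 m_gt0 q_gt0.
Qed.

Local Open Scope ring_scope.

Definition frac_succ (q : nat) : rat := q%:R / q.+1%:R.

Lemma frac_succ_ge0 q : 0 <= frac_succ q.
Proof. by rewrite divr_ge0 ?ler0n. Qed.

Lemma frac_succ_le1 q : frac_succ q <= 1.
Proof. by rewrite ler_pdivrMr ?ltr0Sn // mul1r ler_nat. Qed.

Definition frac_succ_primes (n : nat) : rat := \prod_(q <- primes n) frac_succ q.

Lemma frac_succ_primesM m k : (0 < m)%N -> (0 < k)%N -> coprime m k ->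
  frac_succ_primes (m * k) = frac_succ_primes m * frac_succ_primes k.
Proof.
move=> m_gt0 k_gt0 co_mk; rewrite /frac_succ_primes -big_cat; apply/perm_big/uniq_perm.
- exact: primes_uniq.
- by rewrite cat_uniq !primes_uniq andbT; move: co_mk; rewrite coprime_has_primes.
- by move=> q; rewrite primesM // mem_cat.
Qed.

Lemma frac_succ_primes_pexp q a : prime q -> (0 < a)%N ->
  frac_succ_primes (q ^ a) = frac_succ q.
Proof. by move=> q_pr a_gt0; rewrite /frac_succ_primes primesX // primes_prime // big_seq1. Qed.

Lemma psin_pexp_ge q a : prime q -> ((q ^ a) ^ 2)%:R * frac_succ q <= (psin (q ^ a))%:R.
Proof.
move=> q_pr.
have psinE : q.+1%:R * (psin (q ^ a))%:R = (q ^ a.*2.+1 + 1)%:R :> rat.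
  by rewrite -natrM -psin_pexp // addn1.
rewrite /frac_succ mulrA ler_pdivrMr ?ltr0Sn // [X in _ <= X]mulrC psinE -natrM ler_nat.
by rewrite -expnM muln2 mulnC -expnS leq_addr.
Qed.

Lemma psin_ge n : (0 < n)%N -> (n ^ 2)%:R * frac_succ_primes n <= (psin n)%:R.
Proof.
elim/ltn_ind: n => n IHn n_gt0; have [n_le1 | n_gt1] := leqP n 1.
  have -> : n = 1%N by apply/eqP; rewrite eqn_leq n_le1.
  by rewrite /frac_succ_primes /psin big_nil big_nat1 mulr1.
have q_pr := pdiv_prime n_gt1; set q := pdiv n in q_pr.
have [m co_qm def_n] := pfactor_coprime q_pr n_gt0; set a := logn q n in def_n.
have a_gt0 : (0 < a)%N by rewrite logn_gt0 mem_primes q_pr n_gt0 pdiv_dvd.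
have m_gt0 : (0 < m)%N by move: n_gt0; rewrite def_n muln_gt0 => /andP[].
have qa_gt1 : (1 < q ^ a)%N by rewrite -{1}(expn0 q) ltn_exp2l ?prime_gt1.
have co_mqa : coprime m (q ^ a) by rewrite coprime_pexpr // coprime_sym.
have lt_m_n : (m < n)%N by rewrite def_n ltn_Pmulr.
rewrite def_n psin_mul ?(ltnW qa_gt1) // frac_succ_primesM ?(ltnW qa_gt1) //.
rewrite frac_succ_primes_pexp // expnMn natrM [(psin _ * _)%:R]natrM mulrACA.
apply: ler_pM; [| | exact: IHn | exact: psin_pexp_ge].
- by rewrite mulr_ge0 ?ler0n //; apply: prodr_ge0 => r _; apply: frac_succ_ge0.
- by rewrite mulr_ge0 ?ler0n ?frac_succ_ge0.
Qed.

Lemma prod_le_subset (R : numDomainType) (T : eqType) (s t : seq T) (f : T -> R) :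
  uniq s -> uniq t -> {subset s <= t} -> (forall x, 0 <= f x <= 1) ->
  \prod_(x <- t) f x <= \prod_(x <- s) f x.
Proof.
move=> s_uniq t_uniq s_t f01.
rewrite -(perm_big _ (permEl (perm_filterC [pred x | x \in s] t))) big_cat /=.
have -> : \prod_(x <- [seq x <- t | x \in s]) f x = \prod_(x <- s) f x.
  apply/perm_big/uniq_perm; rewrite ?filter_uniq // => x.
  by rewrite mem_filter andb_idr //; apply: s_t.
apply: ler_piMr; first by apply: prodr_ge0 => x _; case/andP: (f01 x).
exact: prodr_ile1.
Qed.

Definition hbound (N : nat) : rat := N%:R * \prod_(3 <= q < N | prime q) frac_succ q.

Lemma hbound_leS N : hbound N <= hbound N.+1.
Proof.
rewrite /hbound; have [N_lt3 | N_ge3] := ltnP N 3.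
  by rewrite !big_geq ?(ltnW N_lt3) //; apply: ler_wpM2r; rewrite ?ler_nat.
rewrite [X in _ <= _ * X]big_mkcond big_nat_recr //= -big_mkcond /=.
set P := \prod_(3 <= q < N | prime q) frac_succ q.
(* at a prime [N] the new factor [N / (N + 1)] exactly compensates the growth of [N] *)
case: ifP => _; last first.
  by rewrite mulr1 ler_wpM2r ?ler_nat // prodr_ge0 // => q _; apply: frac_succ_ge0.
rewrite le_eqVlt; apply/orP; left; apply/eqP.
by rewrite /frac_succ mulrCA [_.+1%:R * _]mulrCA mulfV ?pnatr_eq0 // mulr1 mulrC.
Qed.

Lemma hbound_le : {homo hbound : a b / (a <= b)%N >-> a <= b}.
Proof. by apply: homo_leq => [x|y x z|N]; [exact: lexx | exact: le_trans | exact: hbound_leS]. Qed.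

Lemma h12_hbound : h12 = hbound 37.
Proof.
rewrite /h12 /hbound (@big_cat_nat _ _ _ 32 3 37) //=.
by rewrite [X in _ = _ * (_ * X)]big_hasC ?mulr1.
Qed.

Lemma hbound_divS p : prime p -> (2 < p)%N ->
  hbound p / p.+1%:R = \prod_(3 <= q < p.+1 | prime q) frac_succ q.
Proof.
move=> p_pr p_gt2; rewrite big_mkcond big_nat_recr //= p_pr -big_mkcond.
by rewrite /hbound /frac_succ mulrCA mulrA.
Qed.

Close Scope ring_scope.

Theorem lemma2p4 (gT : finGroupType) (G : {group gT}) (n p : nat) :
  0 < n -> ~~ (2 %| n) -> p = max_pdiv n -> 37 <= p ->
  cyclic G -> #|G| = n ->
  (h12 * (n ^ 2)%:R / (p.+1)%:R <= (psi G)%:R :> rat)%R.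
Proof.
move=> n_gt0 n_odd def_p p_ge37 cG oG; rewrite (psi_cyclic cG) oG.
have n_gt1 : 1 < n.
  by rewrite ltn_neqAle n_gt0 andbT; apply: contraTneq p_ge37 => n1; rewrite def_p -n1.
have p_pr : prime p by rewrite def_p max_pdiv_prime.
have primes_n_sub : {subset primes n <= [seq q <- index_iota 3 p.+1 | prime q]}.
  move=> q; rewrite mem_primes mem_filter mem_index_iota => /and3P[q_pr _ q_dvd].
  rewrite q_pr ltnS def_p max_pdiv_max ?mem_primes ?q_pr ?n_gt0 ?q_dvd // andbT.
  have : ~~ (2 %| q) by apply: contra n_odd => /dvdn_trans; apply.
  by rewrite dvdn2 negbK => /odd_prime_gt2; apply.
apply: le_trans (psin_ge n_gt0).
rewrite h12_hbound mulrAC mulrC; apply: ler_wpM2l; first exact: ler0n.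
apply: (@le_trans _ _ (hbound p / p.+1%:R)%R).
  apply: ler_wpM2r; first by rewrite invr_ge0 ler0n.
  exact: hbound_le.
rewrite (hbound_divS p_pr (leq_trans (isT : 3 <= 37) p_ge37)) -big_filter.
apply: prod_le_subset => [||//|q]; first exact: primes_uniq.
  by rewrite filter_uniq ?iota_uniq.
by rewrite frac_succ_ge0 frac_succ_le1.
Qed.
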